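(* Let $\kappa\ge 1$, $0\le \ell\le\kappa$, and consider the uncertain plant $$G(s)=\frac{\sum_{i=0}^{\ell}\beta_i s^{\ell-i}}{\sum_{i=0}^{\kappa}\alpha_i s^{\kappa-i}},\qquad \alpha_0=1,$$ with real uncertain parameter vector $\theta=(\alpha_1,\dots,\alpha_\kappa,\beta_0,\dots,\beta_\ell)\in\mathbb{R}^{\kappa+\ell+1}$. Let $\mathcal{B}\subset\mathbb{R}^{\kappa+\ell+1}$ be a nonempty bounded set (the assumed uncertainty range), and suppose there is a real controller $$C(s)=\frac{\sum_{i=0}^{m} b_i s^{m-i}}{\sum_{i=0}^{n} a_i s^{n-i}},\qquad a_0=1,\quad b_0\neq 0,\quad m\le n,$$ which robustly stabilizes the unity-feedback closed loop for every $\theta\in\mathcal{B}$, i.e. for every $\theta\in\mathcal{B}$ the closed-loop characteristic polynomial $$\chi_\theta(s)=\Big(\sum_{i=0}^{n}a_i s^{n-i}\Big)\Big(\sum_{j=0}^{\kappa}\alpha_j s^{\kappa-j}\Big)+\Big(\sum_{i=0}^{m}b_i s^{m-i}\Big)\Big(\sum_{j=0}^{\ell}\beta_j s^{\ell-j}\Big)$$ has all its roots in the open left half-plane. Then there exists a parameter vector $\theta'\notin\mathcal{B}$, obtained from some element of $\mathcal{B}$ by changing a single coordinate $\alpha_i$ or $\beta_j$, for which $\chi_{\theta'}$ has a root with nonnegative real part (i.e. the closed-loop system with the same controller is unstable).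
   Context: Unity negative feedback: the closed-loop system is $C G/(1+CG)$; ''stable'' means the characteristic polynomial $\chi_\theta$ (which is monic of degree $n+\kappa$) is Hurwitz, i.e. all roots have strictly negative real part. *)

(* Complex numbers: an arbitrary numClosedFieldType C
   (e.g. algebraic complex numbers, or any model of C); reals = Num.real part. *)
From HB Require Import structures.
From mathcomp Require Import all_boot all_order all_algebra.
Set Implicit Arguments. Unset Strict Implicit. Unset Printing Implicit Defensive.
Import Order.TTheory GRing.Theory Num.Theory.
Local Open Scope ring_scope.

Definition poly_desc (C : numClosedFieldType) (d : nat) (c : nat -> C) : {poly C} :=
  \sum_(i < d.+1) c i *: 'X^(d - i).

(* theta = (alpha_1..alpha_kappa, beta_0..beta_ell), indexed by 'I_(kappa + ell.+1) *)
Definition alpha_of (C : numClosedFieldType) (kappa ell : nat)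
  (theta : 'I_(kappa + ell.+1) -> C) (i : nat) : C :=
  if i is i'.+1 then
    (match (insub i' : option 'I_kappa) with Some j => theta (lshift ell.+1 j) | None => 0 end)
  else 1.

Definition beta_of (C : numClosedFieldType) (kappa ell : nat)
  (theta : 'I_(kappa + ell.+1) -> C) (j : nat) : C :=
  match (insub j : option 'I_ell.+1) with Some k => theta (rshift kappa k) | None => 0 end.

Definition plant_den (C : numClosedFieldType) kappa ell theta : {poly C} :=
  poly_desc kappa (@alpha_of C kappa ell theta).
Definition plant_num (C : numClosedFieldType) kappa ell theta : {poly C} :=
  poly_desc ell (@beta_of C kappa ell theta).

Definition chi (C : numClosedFieldType) (kappa ell n m : nat) (a b : nat -> C)
  (theta : 'I_(kappa + ell.+1) -> C) : {poly C} :=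
  poly_desc n a * plant_den theta + poly_desc m b * plant_num theta.

Definition hurwitz (C : numClosedFieldType) (p : {poly C}) : Prop :=
  forall z, root p z -> 'Re z < 0.

(* The closed-loop characteristic polynomial has constant coefficient
     chi_theta(0) = a_n * alpha_kappa + b_m * beta_ell,
   which is affine in the last plant coefficients alpha_kappa and beta_ell.
   Starting from any theta0 in the uncertainty set B we change one of them:
   - if a_n <> 0, set alpha_kappa := - b_m * beta_ell / a_n;
   - if a_n = 0,  set beta_ell := 0.
   In both cases the new real vector theta' has chi_theta'(0) = 0, so s = 0
   is a closed-loop pole with real part 0 >= 0.  Since every element of B
   gives a Hurwitz polynomial, theta' cannot lie in B. *)
From HB Require Import structures.
From mathcomp Require Import all_boot all_order all_algebra.
Import Order.TTheory GRing.Theory Num.Theory.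
Local Open Scope ring_scope.
Set Implicit Arguments. Unset Strict Implicit.

Section ClosedLoopAtZero.
Variable C : numClosedFieldType.

Lemma horner0_poly_desc (d : nat) (c : nat -> C) : (poly_desc d c).[0] = c d.
Proof.
rewrite /poly_desc horner_sum big_ord_recr /= big1 ?add0r.
  by rewrite hornerZ hornerXn subnn expr0 mulr1.
move=> i _; rewrite hornerZ hornerXn expr0n.
by rewrite subn_eq0 leqNgt ltn_ord mulr0.
Qed.

Lemma alpha_of_last (k ell : nat) (theta : 'I_(k.+1 + ell.+1) -> C) :
  alpha_of theta k.+1 = theta (lshift ell.+1 ord_max).
Proof.
rewrite /alpha_of; case: insubP => [u _ Hu|]; last by rewrite ltnSn.
by congr (theta _); apply: val_inj; rewrite /= Hu.
Qed.

Lemma beta_of_last (kappa ell : nat) (theta : 'I_(kappa + ell.+1) -> C) :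
  beta_of theta ell = theta (rshift kappa ord_max).
Proof.
rewrite /beta_of; case: insubP => [u _ Hu|]; last by rewrite ltnSn.
by congr (theta _); apply: val_inj; rewrite /= Hu.
Qed.

Lemma chi_horner0 (k ell n m : nat) (a b : nat -> C)
    (theta : 'I_(k.+1 + ell.+1) -> C) :
  (chi n m a b theta).[0] =
    a n * theta (lshift ell.+1 ord_max) + b m * theta (rshift k.+1 ord_max).
Proof.
by rewrite /chi /plant_den /plant_num hornerD !hornerM !horner0_poly_desc
  alpha_of_last beta_of_last.
Qed.

Lemma root0_not_hurwitz (p : {poly C}) : root p 0 -> ~ hurwitz p.
Proof.
by move=> p0 /(_ 0 p0); rewrite (Creal_ReP _ (real0 _)) ltxx.
Qed.

Definition update (N : nat) (theta : 'I_N -> C) (i : 'I_N) (v : C) : 'I_N -> C :=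
  fun j => if j == i then v else theta j.

Lemma update_real (N : nat) (theta : 'I_N -> C) (i : 'I_N) (v : C) :
  (forall j, theta j \is Num.real) -> v \is Num.real ->
  forall j, update theta i v j \is Num.real.
Proof. by move=> r_theta r_v j; rewrite /update; case: ifP. Qed.

Lemma zeroing_update (k ell n m : nat) (a b : nat -> C)
    (theta0 : 'I_(k.+1 + ell.+1) -> C) :
  (forall i, a i \is Num.real) -> (forall i, b i \is Num.real) ->
  (forall j, theta0 j \is Num.real) ->
  exists i v, v \is Num.real /\ (chi n m a b (update theta0 i v)).[0] = 0.
Proof.
move=> ra rb r0.
set ia : 'I_(k.+1 + ell.+1) := lshift ell.+1 ord_max.
set ib : 'I_(k.+1 + ell.+1) := rshift k.+1 ord_max.
have ib_neq_ia : (ib == ia) = false.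
  by apply/negbTE/eqP => /(congr1 val) /= E; move: (leq_addr ell k.+1); rewrite E ltnn.
have [an0 | an_neq0] := eqVneq (a n) 0.
  exists ib, 0; split; first exact: real0.
  by rewrite chi_horner0 /update eqxx an0 mul0r mulr0 addr0.
exists ia, (- (b m * theta0 ib) / a n); split.
  by rewrite rpredM ?rpredN ?rpredV ?rpredM.
rewrite chi_horner0 /update eqxx ib_neq_ia -/ib.
by rewrite mulrC -mulrA mulVf // mulr1 addNr.
Qed.

End ClosedLoopAtZero.

Theorem theorem1 (C : numClosedFieldType) (kappa ell n m : nat) (a b : nat -> C)
  (B : ('I_(kappa + ell.+1) -> C) -> Prop) :
  (0 < kappa)%N -> (ell <= kappa)%N ->
  (forall theta, B theta -> forall i, theta i \is Num.real) ->
  (exists theta, B theta) ->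
  (exists M : C, forall theta, B theta -> forall i, `|theta i| <= M) ->
  a 0%N = 1 -> b 0%N != 0 -> (m <= n)%N ->
  (forall i, a i \is Num.real) -> (forall i, b i \is Num.real) ->
  (forall theta, B theta -> hurwitz (chi n m a b theta)) ->
  exists theta' : 'I_(kappa + ell.+1) -> C,
    (forall i, theta' i \is Num.real) /\ ~ B theta' /\
    (exists theta0, B theta0 /\ exists i, forall j, j != i -> theta' j = theta0 j) /\
    exists z, root (chi n m a b theta') z /\ 0 <= 'Re z.
Proof.
case: kappa B => [|k] B // _ _ realB [theta0 B_theta0] _ _ _ _ ra rb stableB.
have r0 := realB _ B_theta0.
have [i [v [rv chi0]]] := zeroing_update n m ra rb r0.
have root0 : root (chi n m a b (update theta0 i v)) 0 by exact/eqP.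
exists (update theta0 i v); split; first exact: update_real.
split; first by move=> /stableB; apply: root0_not_hurwitz.
split; first by exists theta0; split => //; exists i => j /negbTE; rewrite /update => ->.
by exists 0; split; rewrite ?(Creal_ReP _ (real0 _)).
Qed.
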